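(* The generating function of $(c(n))_{n\ge0}$ is \[ \sum_{n\ge 0}c(n)x^n=\frac{1}{1-x}+\sum_{i\ge 1}\frac{x^{2^{i-1}+1}(1-x^{2^i-1})}{(1-x)(1-x^{2^{i+1}})}, \] and the generating function of $(h(n))_{n\ge 0}$ is \[ \sum_{n\ge 0}h(n)x^n=\sum_{i\ge 1}\frac{x^{2^{i-1}+1}(1-x^{2^i-1})}{(1-x)(1-x^{2^{i+1}})}. \]
   Context: For $i\in\mathbb{N}$ and $n\in\mathbb{N}_0$ let $d_i(n)=2^{i-1}-\left|(n\bmod 2^i)-2^{i-1}\right|$, and let $c(n)$ be the number of distinct values in the set $\{d_i(n): i\in\mathbb{N}\}$. For $k\ge0$ and $0\le m<2^k$ let $\beta_k(m)\in\{0,1\}^k$ be the point whose $j$-th coordinate is the binary digit of $m$ of weight $2^{k-j}$. For $n\ge2$ with $k=\lceil\log_2 n\rceil$, a pair $(n_0,n_1)$ of integers with $n=n_0+n_1$, $n_0\ge n_1\ge1$ is a hypercubic bipartition (HCBP) of $n$ if for some $i\in\{1,\dots,k\}$ the hyperplane $x_i=1/2$ splits $\beta_k(0),\dots,\beta_k(n-1)$ into $n_0$ points on one side and $n_1$ on the other. For $n\ge2$, $h(n)$ is the number of HCBPs of $n$; $h(0)=h(1)=0$. *)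

From HB Require Import structures.
From mathcomp Require Import all_boot all_order all_algebra.
From mathcomp Require Import finmap.
From mathcomp Require Import boolp classical_sets cardinality.
Set Implicit Arguments. Unset Strict Implicit. Unset Printing Implicit Defensive.
Import Order.TTheory GRing.Theory Num.Theory.
Local Open Scope ring_scope.

Definition dval (i n : nat) : int :=
  (2 ^ i.-1)%N%:Z - `| ((n %% 2 ^ i)%N)%:Z - ((2 ^ i.-1)%N)%:Z |.

Definition cfun (n : nat) : nat :=
  #|` fset_set (range (fun i : nat => dval i.+1 n)) |%fset.

(* j-th coordinate (1 <= j <= k) of beta_k(m): binary digit of m of weight 2^(k-j) *)
Definition beta_coord (k m j : nat) : bool := odd (m %/ 2 ^ (k - j))%N.

Definition side1 (k n j : nat) : nat := count (fun m => beta_coord k m j) (iota 0 n).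
Definition side0 (k n j : nat) : nat := count (fun m => ~~ beta_coord k m j) (iota 0 n).

(* (n0, n1) is a hypercubic bipartition of n (for n >= 2), k = ceil(log2 n) *)
Definition is_hcbp (n n0 n1 : nat) : bool :=
  let k := up_log 2 n in
  [&& (n0 + n1 == n)%N, (n1 <= n0)%N, (0 < n1)%N &
      [exists j : 'I_k,
        ((side0 k n j.+1 == n0) && (side1 k n j.+1 == n1)) ||
        ((side1 k n j.+1 == n0) && (side0 k n j.+1 == n1))]].

Definition hfun (n : nat) : nat :=
  if (n < 2)%N then 0%N
  else #|[set p : 'I_n.+1 * 'I_n.+1 | is_hcbp n p.1 p.2]|.

Definition series := nat -> int.

(* g is the power-series expansion of p/q: q * g = p coefficientwise *)
Definition series_of (p q : {poly int}) (g : series) : Prop :=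
  forall n : nat, \sum_(k < n.+1) q`_k * g (n - k)%N = p`_n.

Definition gf_num (i : nat) : {poly int} :=
  'X^(2 ^ i.-1 + 1) * (1 - 'X^(2 ^ i - 1)).
Definition gf_den (i : nat) : {poly int} :=
  (1 - 'X) * (1 - 'X^(2 ^ i.+1)).

From mathcomp Require Import all_boot all_order all_algebra.
From mathcomp Require Import zify ring.
From mathcomp Require Import finmap boolp classical_sets cardinality.
Import Order.TTheory GRing.Theory Num.Theory.
Local Open Scope ring_scope.

(* The sequence i |-> d_i(n) (i >= 1) is nondecreasing, equals n as soon as
   2^(i-1) >= n, and grows from d_i(n) to d_(i+1)(n) exactly when [jump i n],
   i.e. 2^(i-1) < n mod 2^(i+1) < 3 2^(i-1); hence c(n) = 1 + #{i | jump i n}.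
   The hyperplane x_j = 1/2 leaves (n - d_(k-j+1)(n))/2 of the points beta_k(m),
   m < n, on its 1-side (those with digit 1 of weight 2^(k-j)), so h(n) is the
   number of distinct values among d_1(n), ..., d_k(n), that is c(n) - 1, the
   missing value being d_(k+1)(n) = n.  Finally [jump i] is 2^(i+1)-periodic and
   (1-x)(1-x^(2^(i+1))) times its series is x^(2^(i-1)+1) - x^(3 2^(i-1)): it is
   the coefficient sequence of the i-th summand, as 1 is that of 1/(1-x). *)

Lemma modn_double (n d : nat) : (n %% (d * 2) = n %% d + d * odd (n %/ d))%N.
Proof.
case: (posnP d) => [-> | d0]; first by rewrite mul0n !modn0 muln0 addn0.
rewrite {1}(divn_eq n d) -[in LHS](odd_double_half (n %/ d)) -muln2.
rewrite mulnDl addnAC mulnAC -mulnA addnC modnMDl modn_small; first by rewrite addnC mulnC.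
by have := ltn_pmod n d0; case: odd; lia.
Qed.

Lemma dval_ge0 (i n : nat) : 0 <= dval i.+1 n.
Proof. by rewrite /dval /=; have := ltn_pmod n (expn_gt0 2 i.+1); rewrite expnS; lia. Qed.

Lemma dval_le_exp (i n : nat) : dval i.+1 n <= (2 ^ i)%:Z.
Proof. rewrite /dval /=; lia. Qed.

Lemma dval_small (i n : nat) : (n <= 2 ^ i)%N -> dval i.+1 n = n%:Z.
Proof.
by move=> n_le; rewrite /dval /= modn_small; [lia | rewrite expnS; lia].
Qed.

Definition jump (i n : nat) : bool := (2 ^ i.-1 < n %% 2 ^ i.+1 < 3 * 2 ^ i.-1)%N.

Lemma dval_le_succ (i n : nat) : dval i.+1 n <= dval i.+2 n.
Proof.
have P2 : (0 < 2 ^ i * 2)%N by rewrite muln_gt0 expn_gt0.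
rewrite /dval /= !expnSr (modn_double n (2 ^ i * 2)).
by have := ltn_pmod n P2; case: odd; lia.
Qed.

Lemma dval_lt_succ (i n : nat) : (dval i.+1 n < dval i.+2 n) = jump i.+1 n.
Proof.
have P2 : (0 < 2 ^ i * 2)%N by rewrite muln_gt0 expn_gt0.
rewrite /dval /jump /= !expnSr (modn_double n (2 ^ i * 2)).
by have := ltn_pmod n P2; case: odd => r_lt; apply/idP/idP; lia.
Qed.

Lemma jump_out (i n : nat) : (n <= 2 ^ i.-1)%N -> jump i n = false.
Proof.
move=> n_le; rewrite /jump modn_small; first lia.
by rewrite (leq_ltn_trans n_le) // ltn_exp2l //; case: i {n_le} => //= i; lia.
Qed.

Lemma jump_top (k n : nat) : (0 < k)%N -> (2 ^ k.-1 < n <= 2 ^ k)%N -> jump k n.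
Proof.
case: k => // k _; rewrite /jump /= !expnS => /andP[lt_n n_le].
by rewrite modn_small; lia.
Qed.

Lemma count_jump_out (n m l : nat) : (n <= 2 ^ m.-1)%N -> count (jump^~ n) (iota m l) = 0%N.
Proof.
move=> n_le; apply/eqP; rewrite -leqn0 leqNgt -has_count; apply/hasPn => i.
rewrite mem_iota => /andP[m_le _]; rewrite /= jump_out //.
by rewrite (leq_trans n_le) // leq_exp2l // -!subn1 leq_sub2r.
Qed.

Definition bit_count (b n : nat) : nat := count (fun m => odd (m %/ 2 ^ b)) (iota 0 n).

Lemma bit_count_dval (b n : nat) : n%:Z - 2 * (bit_count b n)%:Z = dval b.+1 n.
Proof.
have P2 : (0 < 2 ^ b * 2)%N by rewrite muln_gt0 expn_gt0.
elim: n => [|n IH]; first by rewrite /bit_count /dval /= mod0n; lia.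
rewrite /bit_count -addn1 iotaD count_cat /= -/(bit_count b n) add0n addn0.
move: IH; rewrite /dval /= expnSr -modnDml.
have := modn_double n (2 ^ b); have := ltn_pmod n (expn_gt0 2 b).
have := ltn_pmod n P2; set r := (n %% (2 ^ b * 2))%N => r_lt.
have [r1_lt | r1_gt | r1_eq] := ltngtP (r + 1) (2 ^ b * 2).
- by rewrite (modn_small r1_lt); case: odd; lia.
- by lia.
- by rewrite r1_eq modnn; case: odd; lia.
Qed.

Lemma bit_count_bounds (b n : nat) :
  (2 ^ b < n)%N -> (0 < bit_count b n)%N /\ (2 * bit_count b n <= n)%N.
Proof. by have := bit_count_dval b n; have := dval_ge0 b n; have := dval_le_exp b n; lia. Qed.

Section NondecreasingSeq.
Variables (disp : Order.disp_t) (T : porderType disp) (f : nat -> T).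
Hypothesis f_le_succ : forall i, (f i <= f i.+1)%O.

Lemma size_undup_nondecreasing (s L : nat) :
  size (undup [seq f i | i <- iota s L.+1]) =
  (count (fun i => f i < f i.+1)%O (iota s L)).+1.
Proof.
have f_homo := homo_leq (@lexx _ T) (@le_trans _ T) f_le_succ.
elim: L s => [//|L IH] s.
have mem_fs : (f s \in [seq f i | i <- iota s.+1 L.+1]) = (f s == f s.+1).
  apply/mapP/eqP => [[j] | ->]; last by exists s.+1; rewrite //= in_cons eqxx.
  rewrite mem_iota => /andP[sj _] fsj; apply/le_anti.
  by rewrite f_le_succ fsj f_homo.
rewrite -[iota s L.+2]/(s :: iota s.+1 L.+1) map_cons [count _ _]/= -addnS -IH.
move: (map f _) mem_fs => t /= ->.
by rewrite lt_neqAle f_le_succ andbT; case: eqP.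
Qed.

End NondecreasingSeq.

Lemma size_undup_map_in (T1 T2 : eqType) (f : T1 -> T2) (s : seq T1) :
  {in s &, injective f} -> size (undup (map f s)) = size (undup s).
Proof.
move=> f_inj; rewrite -(size_map f); apply/perm_size/uniq_perm; rewrite ?undup_uniq //.
  by rewrite map_inj_in_uniq ?undup_uniq // => x y; rewrite !mem_undup; apply: f_inj.
by move=> y; rewrite mem_undup (eq_mem_map f (mem_undup s)).
Qed.

Lemma size_undup_dval (n L : nat) :
  size (undup [seq dval i.+1 n | i <- iota 0 L.+1]) = (count (jump^~ n) (iota 1 L)).+1.
Proof.
rewrite (@size_undup_nondecreasing _ _ _ (dval_le_succ ^~ n)) (iotaDl 1 0) count_map.
by congr _.+1; apply: eq_count => i; rewrite /= dval_lt_succ.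
Qed.

Lemma cfun_count (n : nat) : cfun n = (count (jump^~ n) (iota 1 n)).+1.
Proof.
rewrite /cfun; pose s := [seq dval i.+1 n | i <- iota 0 n.+1].
have -> : range (fun i => dval i.+1 n) = [set` [fset x in s]%fset]%classic.
  apply/seteqP; split => x /=; rewrite in_fset; last by case/mapP=> i _ ->; exists i.
  case=> i _ <-; apply/mapP; case: (leqP i n) => [i_le | n_lt].
    by exists i; rewrite // mem_iota; lia.
  exists n; first by rewrite mem_iota; lia.
  have := ltn_expl n (ltnSn 1); have : (2 ^ n <= 2 ^ i)%N by rewrite leq_exp2l // ltnW.
  by move=> *; rewrite !dval_small //; lia.
by rewrite set_fsetK card_fseq size_undup_dval.
Qed.

Lemma up_log2_bounds (n : nat) : (2 <= n)%N ->
  [/\ 0 < up_log 2 n, up_log 2 n <= n, 2 ^ (up_log 2 n).-1 < n & n <= 2 ^ up_log 2 n]%N.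
Proof.
move=> n2; split; [by rewrite up_log_gt0 | | exact: up_log_gtn | exact: up_logP].
by apply: up_log_min => //; apply: ltnW; apply: ltn_expl.
Qed.

Lemma is_hcbp_side1 (n n0 n1 : nat) : (2 <= n)%N ->
  is_hcbp n n0 n1 =
  has (fun j => (n0 == n - side1 (up_log 2 n) n j.+1)%N && (n1 == side1 (up_log 2 n) n j.+1))
      (iota 0 (up_log 2 n)).
Proof.
move=> n2; have [_ _ lt_n _] := up_log2_bounds _ n2; rewrite /is_hcbp.
set k := up_log 2 n in lt_n *.
have side1_bounds j : (j < k)%N -> (0 < side1 k n j.+1)%N /\ (2 * side1 k n j.+1 <= n)%N.
  move=> jk; apply: bit_count_bounds; apply: leq_ltn_trans lt_n; rewrite leq_exp2l //; lia.
have side01 j : (side0 k n j + side1 k n j)%N = n.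
  by rewrite addnC (count_predC (fun m => beta_coord k m j)) size_iota.
apply/and4P/hasP => [[/eqP sum01 le10 gt0 /existsP[j side_j]] | [j]].
  exists (j : nat); first by rewrite mem_iota /=.
  have := side1_bounds j (ltn_ord j); have := side01 j.+1 => s01 [b0 b2].
  by case/orP: side_j => /andP[/eqP e0 /eqP e1]; apply/andP; split; apply/eqP; lia.
rewrite mem_iota /= => jk /andP[/eqP-> /eqP->].
have := side1_bounds j jk; have := side01 j.+1 => s01 [b0 b2].
split; [apply/eqP; lia | lia | lia | apply/existsP].
by exists (Ordinal jk); rewrite /= eqxx andbT; apply/orP; left; apply/eqP; lia.
Qed.

Lemma hfun_side1 (n : nat) : (2 <= n)%N ->
  hfun n = size (undup [seq side1 (up_log 2 n) n j.+1 | j <- iota 0 (up_log 2 n)]).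
Proof.
move=> n2; rewrite /hfun ltnNge n2 /=.
set k := up_log 2 n; set s := map _ (iota 0 k).
have s_le x : x \in s -> (x <= n)%N.
  by case/mapP=> j _ ->; rewrite -[X in (_ <= X)%N](size_iota 0 n) count_size.
pose pair (x : nat) : 'I_n.+1 * 'I_n.+1 := (inord (n - x), inord x).
have -> : [set p : 'I_n.+1 * 'I_n.+1 | is_hcbp n p.1 p.2] = [set p in map pair s].
  apply/setP => -[x y]; rewrite !inE is_hcbp_side1 //= -/k.
  apply/hasP/mapP => [[j j_k /andP[x_eq y_eq]] | [_ /mapP[j j_k ->] [-> ->]]].
    have side1_in : side1 k n j.+1 \in s by exact: map_f.
    exists (side1 k n j.+1) => //.
    by congr (_, _); apply/val_inj/eqP; rewrite /= inordK ?ltnS ?leq_subr ?s_le.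
  have side1_in : side1 k n j.+1 \in s by exact: map_f.
  by exists j => //; rewrite !inordK ?ltnS ?leq_subr ?s_le // !eqxx.
rewrite cardsE -(eq_card (mem_undup _)) (card_uniqP (undup_uniq _)).
apply: size_undup_map_in => x y /s_le x_le /s_le y_le [_ /(congr1 val)].
by rewrite /= !inordK.
Qed.

Lemma hfun_count (n : nat) : hfun n = count (jump^~ n) (iota 1 n).
Proof.
case: (ltnP n 2) => [|n2]; first by case: n => [|[|]].
have [k_gt0 k_le lt_n n_le] := up_log2_bounds _ n2.
rewrite hfun_side1 //; set k := up_log 2 n in k_gt0 k_le lt_n n_le *.
have -> : size (undup [seq side1 k n j.+1 | j <- iota 0 k]) =
          size (undup [seq dval b.+1 n | b <- iota 0 k]).
  have /perm_size-> : perm_eq (undup [seq bit_count (k - j.+1) n | j <- iota 0 k])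
                              (undup [seq bit_count b n | b <- iota 0 k]).
    apply: perm_undup => x; apply/mapP/mapP => -[j]; rewrite mem_iota /= => j_lt ->.
      by exists (k - j.+1)%N; rewrite // mem_iota; lia.
    by exists (k - j.+1)%N; rewrite ?mem_iota; [lia | congr bit_count; lia].
  rewrite -(@size_undup_map_in _ _ (fun x : nat => n%:Z - 2 * x%:Z)); last by move=> x y _ _; lia.
  by rewrite -map_comp; congr (size (undup _)); apply: eq_map => b; rewrite /= bit_count_dval.
rewrite -(prednK k_gt0) size_undup_dval.
have -> : iota 1 n = iota 1 k.-1 ++ iota k (n - k).+1.
  by rewrite -{2}(prednK k_gt0) -iotaD; congr iota; lia.
by rewrite count_cat /= jump_top ?lt_n // (@count_jump_out n k.+1 (n - k) n_le) addn0 addn1.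
Qed.

Lemma series_ofE (p q : {poly int}) (g : series) :
  series_of p q g <-> forall n, (q * \poly_(m < n.+1) g m)`_n = p`_n.
Proof.
have coef_mul n : (q * \poly_(m < n.+1) g m)`_n = \sum_(k < n.+1) q`_k * g (n - k)%N.
  by rewrite coefM; apply: eq_bigr => k _; rewrite coef_poly ltnS leq_subr.
by split=> qg n; rewrite -qg coef_mul.
Qed.

Lemma series_of_unique {p q : {poly int}} {f g : series} :
  q`_0 = 1 -> series_of p q f -> series_of p q g -> f =1 g.
Proof.
move=> q0 f_p g_p; elim/ltn_ind => n IH; move: (f_p n); rewrite -(g_p n).
rewrite !big_ord_recl q0 !mul1r subn0.
have tails : \sum_(k < n) q`_(lift ord0 k) * f (n - lift ord0 k)%N =
             \sum_(k < n) q`_(lift ord0 k) * g (n - lift ord0 k)%N.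
  by apply: eq_bigr => k _; rewrite IH // lift0; have := ltn_ord k; lia.
by rewrite tails => /addIr.
Qed.

Lemma coefM_1subX_1subXn (R : comNzRingType) (P n : nat) (p : {poly R}) :
  ((1 - 'X) * (1 - 'X^P) * p)`_n =
  p`_n - (if (n < 1)%N then 0 else p`_(n - 1)) - (if (n < P)%N then 0 else p`_(n - P))
  + (if (n < P.+1)%N then 0 else p`_(n - P.+1)).
Proof.
have -> : (1 - 'X) * (1 - 'X^P) = 1 - 'X^1 - 'X^P + 'X^(P.+1) :> {poly R}.
  by rewrite expr1 exprS; ring.
by rewrite !mulrDl !mulNr mul1r !coefD !coefN !coefXnM.
Qed.

Lemma series_of_1X : series_of 1 (1 - 'X) (fun=> 1).
Proof.
apply/series_ofE => n; rewrite mulrBl mul1r coefB coefXM !coef_poly coef1 ltnSn.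
by case: n => [|n] /=; rewrite ?subr0 // ltnS leqnSn subrr.
Qed.

Lemma gf_den_coef0 (i : nat) : (gf_den i)`_0 = 1.
Proof. by rewrite /gf_den coef0M !coefB coef1 coefX coefXn (ltn_eqF (expn_gt0 2 i.+1)). Qed.

Lemma series_of_jump (i : nat) : (0 < i)%N ->
  series_of (gf_num i) (gf_den i) (fun n => (jump i n)%:R).
Proof.
case: i => // j _; apply/series_ofE => n; rewrite /gf_den coefM_1subX_1subXn.
rewrite /gf_num mulrBr mulr1 -exprD coefB !coefXn !coef_poly /=.
set P := (2 ^ j.+2)%N.
have P_eq : P = (4 * 2 ^ j)%N by rewrite /P !expnS mulnA.
have jump_window m : (m < P)%N -> jump j.+1 m = (2 ^ j < m < 3 * 2 ^ j)%N.
  by move=> m_lt; rewrite /jump /= modn_small.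
have jump_subP m : (P <= m)%N -> jump j.+1 (m - P) = jump j.+1 m.
  by move/subnK => {2}<-; rewrite /jump modnDr.
rewrite !ltnS leqnn !leq_subr [(2 ^ j.+1)%N]expnS.
have [n_lt | P_lt | ->] := ltngtP n P.
- rewrite jump_window // jump_window; last by lia.
  rewrite P_eq in n_lt *; move: (2 ^ j)%N (expn_gt0 2 j) n_lt => a a_gt0.
  by case: n => [|n] n_lt /=; lia.
- rewrite jump_subP; last exact: ltnW.
  rewrite (_ : n - P.+1 = n.-1 - P)%N; last by lia.
  rewrite jump_subP -?subn1; last by lia.
  have [ne1 ne2] : n != (2 ^ j + 1)%N /\ n != (2 ^ j + 1 + (2 * 2 ^ j - 1))%N.
    by rewrite P_eq in P_lt; split; apply/eqP; lia.
  by rewrite (negbTE ne1) (negbTE ne2) ifF; lia.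
- rewrite -[jump j.+1 P](jump_subP P) // subnn !jump_window ?subn1 ?ltn_predL ?expn_gt0 //.
  rewrite P_eq; move: (2 ^ j)%N (expn_gt0 2 j) => a a_gt0.
  by case: ifP; lia.
Qed.

Lemma sum_jump (n K : nat) : (n < K)%N ->
  \sum_(1 <= i < K) ((jump i n)%:R : int) = (count (jump^~ n) (iota 1 n))%:R.
Proof.
move=> n_lt; rewrite -natr_sum; congr _%:R.
have -> : (\sum_(1 <= i < K) jump i n = count (jump^~ n) (index_iota 1 K))%N.
  by rewrite -sum1_count [RHS]big_mkcond; apply: eq_bigr => i _; case: jump.
have -> : index_iota 1 K = iota 1 n ++ iota n.+1 (K - n.+1).
  by rewrite /index_iota -iotaD; congr iota; lia.
rewrite count_cat (@count_jump_out n n.+1) ?addn0 //.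
exact: ltnW (ltn_expl n (ltnSn 1)).
Qed.

Theorem theorem15 (u : series) (g : nat -> series) :
  series_of 1 (1 - 'X) u ->
  (forall i : nat, (1 <= i)%N -> series_of (gf_num i) (gf_den i) (g i)) ->
  forall n : nat, exists K0 : nat, forall K : nat, (K0 <= K)%N ->
    (cfun n)%:Z = u n + \sum_(1 <= i < K) g i n /\
    (hfun n)%:Z = \sum_(1 <= i < K) g i n.
Proof.
move=> u_1X g_gf n; exists n.+1 => K n_lt.
have u_1 : u =1 fun=> 1.
  by apply: series_of_unique u_1X series_of_1X; rewrite coefB coef1 coefX.
have g_jump : \sum_(1 <= i < K) g i n = \sum_(1 <= i < K) (jump i n)%:R.
  apply: eq_big_nat => i /andP[i_gt0 _].
  exact: series_of_unique (gf_den_coef0 i) (g_gf i i_gt0) (series_of_jump _ i_gt0) n.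
rewrite g_jump sum_jump // cfun_count hfun_count u_1.
by split; lia.
Qed.
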